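(* Let $q$ be a prime power with $q\equiv 1\pmod 3$. The connected components of $C_A(q)$ are as follows: (a) there are exactly $q-1$ isolated vertices, namely the $\pi\in AGL(1,q)$ with $\pi(F)=F$ (and a vertex is isolated iff $\pi(F)=F$); (b) if $q$ is odd, every component that is not an isolated vertex is a cycle of length $6$; (c) if $q$ is even, every component that is not an isolated vertex is a cycle of length $3$.
   Context: $AGL(1,q)=\{x\mapsto ax+b: a\in GF(q)\setminus\{0\}, b\in GF(q)\}$, acting on $GF(q)$. For permutations $\pi,\sigma$ of a finite set, $hd(\pi,\sigma)$ is the number of points at which they differ. Fix a distinguished element $F\in GF(q)$. For a permutation $\pi$ of $GF(q)$, $\pi^{\triangle}$ is the permutation with $\pi^{\triangle}(\pi^{-1}(F))=\pi(F)$, $\pi^{\triangle}(F)=F$, and $\pi^{\triangle}(x)=\pi(x)$ otherwise. The contraction graph $C_A(q)$ has vertex set $AGL(1,q)$, with distinct $\pi,\sigma$ adjacent iff $hd(\pi^{\triangle},\sigma^{\triangle})=q-4$. *)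

From HB Require Import structures.
From mathcomp Require Import all_boot all_order all_algebra all_fingroup all_field.
Set Implicit Arguments. Unset Strict Implicit. Unset Printing Implicit Defensive.
Import GRing.Theory.
Local Open Scope ring_scope.

Section Defs.
Variable F : finFieldType.

Definition AGL : {set {perm F}} :=
  [set p : {perm F} | [exists a : F, exists b : F,
      (a != 0) && [forall x : F, p x == a * x + b]]].

Definition hd (f g : F -> F) : nat := #|[set x : F | f x != g x]|.

Definition tri (Fd : F) (p : {perm F}) (x : F) : F :=
  if x == Fd then Fd
  else if x == (p^-1)%g Fd then p Fd
  else p x.

Definition cadj (Fd : F) : rel {perm F} := fun p s =>
  [&& p \in AGL, s \in AGL, p != s &
      hd (tri Fd p) (tri Fd s) == (#|F| - 4)%N].

Definition isolated (Fd : F) (p : {perm F}) : bool :=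
  [forall s : {perm F}, ~~ cadj Fd p s].

Definition component (Fd : F) (p : {perm F}) : {set {perm F}} :=
  [set s | connect (cadj Fd) p s].
End Defs.

Definition is_cycle_graph (T : finType) (e : rel T) (C : {set T}) (n : nat) : Prop :=
  exists s : seq T, [/\ uniq s, size s = n, C = [set x in s] &
    {in C &, forall x y, e x y = (y == next s x) || (x == next s y)}].

From HB Require Import structures.
From mathcomp Require Import all_boot all_order all_algebra all_fingroup all_field all_solvable.
From mathcomp Require Import ring zify.

(* Let r be a root of X^2 - X + 1 (r = -w for a primitive cube root of unity w, which exists
   because 3 divides q - 1), let d be the dilation x |-> r (x - F) + F, and let
   twist(pi) = d o pi o d.  If pi is affine with pi(F) <> F, then pi^tri and twist(pi)^tri agree at
   exactly four points, so pi is adjacent to twist(pi).  Conversely, if pi^tri and sigma^tri agree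
   at four points then, since distinct affine maps agree at most once, they agree at F, pi^-1(F)
   and sigma^-1(F); the two resulting linear equations force u^2 - u u' + u'^2 = 0 for
   u = pi^-1(F) - F and u' = sigma^-1(F) - F, i.e. u = r u' or u' = r u, which says exactly that
   sigma = twist(pi) or pi = twist(sigma).  So the vertices fixing F are isolated and the component
   of any other vertex is its twist-orbit, a cycle whose length is the multiplicative order of r:
   6 in odd characteristic and 3 in characteristic 2. *)

Set Implicit Arguments. Unset Strict Implicit. Unset Printing Implicit Defensive.
Import GRing.Theory FinRing.Theory.

Section Affine.
Variables (F : finFieldType) (Fd : F).
Implicit Types (p s : {perm F}) (f g : F -> F).
Local Open Scope ring_scope.

Lemma AGLP p :
  reflect (exists2 a, a != 0 & exists b, forall x, p x = a * x + b) (p \in AGL F).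
Proof.
rewrite inE; apply: (iffP existsP) => [[a /existsP[b /andP[a0 /forallP h]]]|[a a0 [b h]]].
  by exists a => //; exists b => x; apply/eqP.
by exists a; apply/existsP; exists b; rewrite a0; apply/forallP => x; rewrite h.
Qed.

Lemma AGL_centered p : p \in AGL F ->
  exists2 a, a != 0 & forall x, p x = a * (x - (p^-1)%g Fd) + Fd.
Proof.
move=> /AGLP[a a0 [b h]]; exists a => // x.
have hP := h ((p^-1)%g Fd); rewrite permKV in hP.
rewrite h; set P := (p^-1)%g Fd in hP *; rewrite hP; ring.
Qed.

Lemma eq_AGL_at2 p s x y : p \in AGL F -> s \in AGL F -> x != y ->
  p x = s x -> p y = s y -> p = s.
Proof.
move=> /AGLP[a a0 [b hp]] /AGLP[a' a'0 [b' hs]] xy; rewrite !hp !hs => ex ey.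
have /eqP : (a - a') * (x - y) = 0.
  have -> : (a - a') * (x - y) = (a * x + b - (a' * x + b')) - (a * y + b - (a' * y + b')).
    by ring.
  by rewrite ex ey !subrr.
rewrite mulf_eq0 !subr_eq0 (negbTE xy) orbF => /eqP aa'.
move: ex; rewrite aa' => /addrI bb'.
by apply/permP => z; rewrite hp hs aa' bb'.
Qed.

Definition agree f g : {set F} := [set x | f x == g x].

Lemma hd_agree f g : (hd f g + #|agree f g|)%N = #|F|.
Proof.
rewrite /hd addnC -(cardsC (agree f g)); congr (_ + _)%N.
by apply: eq_card => x; rewrite !inE.
Qed.

Lemma hd_sym f g : hd f g = hd g f.
Proof. by apply: eq_card => x; rewrite !inE eq_sym. Qed.

Lemma cadj_sym : symmetric (cadj Fd).
Proof. by move=> p s; rewrite /cadj hd_sym eq_sym; do 2 case: (_ \in AGL F). Qed.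

Lemma triE p x :
  tri Fd p x = if x == Fd then Fd else if p x == Fd then p Fd else p x.
Proof.
rewrite /tri; suff -> : (x == (p^-1)%g Fd) = (p x == Fd) by [].
by apply/eqP/eqP => [->|<-]; rewrite ?permKV ?permK.
Qed.

Lemma cadj_agree p s : (4 <= #|F|)%N -> cadj Fd p s ->
  [/\ (p^-1)%g Fd != Fd, (s^-1)%g Fd != Fd,
      p Fd = s ((p^-1)%g Fd) & p ((s^-1)%g Fd) = s Fd].
Proof.
move=> q4 /and4P[pA sA ps /eqP hd4].
set A := agree (tri Fd p) (tri Fd s); set P := (p^-1)%g Fd; set P' := (s^-1)%g Fd.
have cardA : #|A| = 4%N.
  by have := hd_agree (tri Fd p) (tri Fd s); rewrite hd4 -/A; have := max_card A; lia.
set S := [set x in [:: Fd; P; P']].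
(* Off [S] both contractions are the affine maps themselves, which agree at most once. *)
have cardAS : (#|A :\: S| <= 1)%N.
  rewrite leqNgt; apply/negP => /card_gt1P[x [y [xA yA xy]]]; case/eqP: ps.
  suff agreeAS z : z \in A :\: S -> p z = s z.
    exact: eq_AGL_at2 pA sA xy (agreeAS x xA) (agreeAS y yA).
  rewrite !inE !negb_or => /andP[/and3P[zFd zP zP'] /eqP].
  by rewrite /tri (negbTE zFd) (negbTE zP) (negbTE zP').
have cardS : (#|S| <= 3)%N by rewrite cardsE card_size.
have := cardsID S A; have := subset_leq_card (subsetIr A S); rewrite cardA => cardAIS splitA.
have cardS3 : #|S| = 3%N by lia.
have SA : S \subset A.
  have /eqP <- : A :&: S == S by rewrite eqEcard subsetIr; lia.
  exact: subsetIl.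
have /card_uniqP : #|[:: Fd; P; P']| = size [:: Fd; P; P'] by rewrite -cardsE cardS3.
rewrite /= !inE !negb_or => /and3P[/andP[FdP FdP'] PP' _].
have /subsetP/(_ P) := SA; have /subsetP/(_ P') := SA; rewrite !inE !eqxx !orbT.
rewrite /tri -/P -/P' !eqxx ![_ == Fd]eq_sym (negbTE FdP) (negbTE FdP') (eq_sym P').
by rewrite (negbTE PP') => /(_ isT)/eqP P'A /(_ isT)/eqP PA.
Qed.

Definition dil (c x : F) := c * (x - Fd) + Fd.

Lemma dil_inj c : c != 0 -> injective (dil c).
Proof. by move=> c0 x y /addIr /(mulfI c0) /addIr. Qed.

Lemma dilM c d x : dil c (dil d x) = dil (c * d) x.
Proof. by rewrite /dil; ring. Qed.

Lemma dil1 x : dil 1 x = x.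
Proof. by rewrite /dil; ring. Qed.

Lemma dil_center c : dil c Fd = Fd.
Proof. by rewrite /dil subrr mulr0 add0r. Qed.

Lemma dil_injl x : x != Fd -> injective (dil^~ x).
Proof. by rewrite -subr_eq0 => x0 c d /addIr /(mulIf x0). Qed.

Lemma dil_fix c x : c != 1 -> (dil c x == x) = (x == Fd).
Proof.
move=> c1; rewrite /dil -subr_eq0 (_ : _ - x = (c - 1) * (x - Fd)); last by ring.
by rewrite mulf_eq0 subr_eq0 (negbTE c1) subr_eq0.
Qed.

Definition dilp c (c0 : c != 0) : {perm F} := perm (dil_inj c0).

Lemma dilpE c (c0 : c != 0) x : dilp c0 x = dil c x.
Proof. by rewrite permE. Qed.

Lemma card_AGL_fix : #|[set p in AGL F | p Fd == Fd]| = #|F|.-1.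
Proof.
pose slope p := p (1 + Fd) - Fd.
have slope_dilp c (c0 : c != 0) : slope (dilp c0) = c.
  by rewrite /slope dilpE /dil !addrK mulr1.
rewrite -(cardsC1 0) -(card_in_imset (f := slope)); last first.
  move=> p s /setIdP[pA /eqP pF] /setIdP[sA /eqP sF] /addIr e.
  apply: (eq_AGL_at2 pA sA _ e (etrans pF (esym sF))).
  by rewrite -subr_eq0 addrK oner_eq0.
apply: eq_card => c; rewrite in_setC1; apply/imsetP/idP.
  move=> [p]; rewrite in_set => /andP[/AGLP[a a0 [b hp]] /eqP pF] ->.
  by rewrite /slope -{2}pF !hp (_ : _ - _ = a) //; ring.
move=> c0; exists (dilp c0); rewrite ?slope_dilp // in_set dilpE dil_center eqxx andbT.
by apply/AGLP; exists c => //; exists (Fd - c * Fd) => x; rewrite dilpE /dil; ring.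
Qed.

End Affine.

Section Twist.
Variables (F : finFieldType) (Fd r : F).
Local Open Scope ring_scope.
Hypothesis r_neq0 : r != 0.
Implicit Types (p z : {perm F}).
Local Notation dil := (dil Fd).

Definition twist z : {perm F} := (dilp Fd r_neq0 * z * dilp Fd r_neq0)%g.

Lemma twistE z x : twist z x = dil r (z (dil r x)).
Proof. by rewrite /twist !permM !dilpE. Qed.

Lemma iter_twistE k z x : iter k twist z x = dil (r ^+ k) (z (dil (r ^+ k) x)).
Proof.
elim: k x => [|k IH] x; first by rewrite !expr0 !dil1.
by rewrite iterS twistE IH !dilM exprS mulrC.
Qed.

Lemma iter_twist_center k z : iter k twist z Fd = dil (r ^+ k) (z Fd).
Proof. by rewrite iter_twistE dil_center. Qed.

Lemma iter_twist_moves k z : z Fd != Fd -> iter k twist z Fd != Fd.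
Proof.
rewrite iter_twist_center; apply: contra => /eqP e; apply/eqP.
by apply: (dil_inj (Fd := Fd) (expf_neq0 k r_neq0)); rewrite e dil_center.
Qed.

Lemma iter_twist_id n z : r ^+ n = 1 -> iter n twist z = z.
Proof. by move=> rn; apply/permP => x; rewrite iter_twistE rn !dil1. Qed.

Lemma twist_AGL z : z \in AGL F -> twist z \in AGL F.
Proof.
move=> /AGLP[a a0 [b h]]; apply/AGLP; exists (r * a * r); first by rewrite !mulf_neq0.
by exists (r * (a * (Fd - r * Fd) + b - Fd) + Fd) => x; rewrite twistE h /dil; ring.
Qed.

Lemma iter_twist_AGL k z : z \in AGL F -> iter k twist z \in AGL F.
Proof. by move=> zA; elim: k => // k IH; rewrite iterS twist_AGL. Qed.

Lemma twist_centered p a u : (forall x, p x = a * (x - (u + Fd)) + Fd) ->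
  forall x, twist p x = a * r ^+ 2 * (x - (u / r + Fd)) + Fd.
Proof. by move=> hp x; rewrite twistE hp /dil; field. Qed.

End Twist.

Section Root.
Variables (F : finFieldType) (Fd r : F).
Local Open Scope ring_scope.
Hypotheses (r_root : r ^+ 2 - r + 1 = 0) (r_neqN1 : r + 1 != 0).
Implicit Types (p s : {perm F}).

Lemma root_neq0 : r != 0.
Proof. by apply/eqP => r0; move/eqP: r_root; rewrite r0 expr0n subr0 add0r oner_eq0. Qed.

Lemma root_neq1 : r != 1.
Proof. by apply/eqP => r1; move/eqP: r_root; rewrite r1 expr1n subrr add0r oner_eq0. Qed.

Lemma root_sqr : r ^+ 2 = r - 1.
Proof. by apply/eqP; rewrite -subr_eq0 -r_root; apply/eqP; ring. Qed.

Lemma uniq_root_points : uniq [:: 0; 1; r; 1 + r].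
Proof.
rewrite /= !inE !negb_or eq_sym oner_neq0 eq_sym root_neq0 eq_sym addrC r_neqN1.
rewrite eq_sym root_neq1 eq_sym -subr_eq0 addrK root_neq0 eq_sym -subr_eq0.
by rewrite addrAC subrr add0r oner_neq0.
Qed.

Lemma card_ge4 : (4 <= #|F|)%N.
Proof.
by rewrite -[4%N]/(size [:: 0; 1; r; 1 + r]) -(card_uniqP uniq_root_points) max_card.
Qed.

Local Notation twist := (twist Fd root_neq0).

Lemma agree_tri_twist p a u X : a != 0 -> u != 0 ->
  (forall x, p x = a * (x - (u + Fd)) + Fd) ->
  (X + Fd \in agree (tri Fd p) (tri Fd (twist p))) = (X \in [:: 0; u; u / r; u / (1 + r)]).
Proof.
move=> a0 u0 hp; have r0 := root_neq0.
have pX Y : p (Y + Fd) = a * (Y - u) + Fd by rewrite hp; ring.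
have qX Y : twist p (Y + Fd) = a * r ^+ 2 * (Y - u / r) + Fd.
  by rewrite (twist_centered _ hp); ring.
have pFd : p Fd = a * (0 - u) + Fd by rewrite -pX add0r.
have qFd : twist p Fd = a * r ^+ 2 * (0 - u / r) + Fd by rewrite -qX add0r.
have eqFd Y : (Y + Fd == Fd) = (Y == 0) by rewrite -subr_eq0 addrK.
have eq_addFd := inj_eq (addIr Fd).
have root0 c : c * (r ^+ 2 - r + 1) = 0 by rewrite r_root mulr0.
have uur : (u == u / r) = false.
  apply: contraNF root_neq1 => /eqP e; apply/eqP; apply: (mulIf u0).
  by rewrite mul1r {1}e mulrC divfK.
rewrite inE !triE pX qX pFd qFd !eqFd !inE.
have [->|X0] := eqVneq X 0; first by rewrite /= eqxx.
rewrite !mulf_eq0 (negbTE a0) (negbTE r0) /= !subr_eq0.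
have [->|Xu] := eqVneq X u.
  rewrite uur eq_addFd; apply/eqP/subr0_eq.
  by rewrite -[RHS](root0 (- (a * u))); field.
have [->|Xur] /= := eqVneq X (u / r).
  rewrite eq_addFd; apply/eqP/subr0_eq.
  by rewrite -[RHS](root0 (a * u / r)); field.
rewrite eq_addFd -subr_eq0 (_ : _ - _ = a * (1 - r) * ((1 + r) * X - u)); last by field.
rewrite !mulf_eq0 (negbTE a0) subr_eq0 eq_sym (negbTE root_neq1) /= subr_eq0.
by rewrite -{2}[X]divr1 eqr_div ?oner_neq0 1?addrC // mulr1 mulrC.
Qed.

Lemma cadj_twist p : p \in AGL F -> p Fd != Fd -> cadj Fd p (twist p).
Proof.
move=> pA pF; have [a a0 hp] := AGL_centered Fd pA.
set u := (p^-1)%g Fd - Fd.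
have hpu x : p x = a * (x - (u + Fd)) + Fd by rewrite /u subrK.
have u0 : u != 0 by rewrite /u subr_eq0; apply: contra pF => /eqP e; rewrite -{1}e permKV.
have agree_pts : [:: 0; u; u / r; u / (1 + r)] = [seq u / x | x <- [:: 0; 1; r; 1 + r]].
  by rewrite /= invr0 mulr0 divr1.
have card_agree : #|agree (tri Fd p) (tri Fd (twist p))| = 4%N.
  have uniq_pts : uniq [seq X + Fd | X <- [:: 0; u; u / r; u / (1 + r)]].
    rewrite (map_inj_uniq (addIr Fd)) agree_pts (map_inj_uniq _) ?uniq_root_points //.
    exact: inj_comp (mulfI u0) invr_inj.
  rewrite -[4%N]/(size [seq X + Fd | X <- [:: 0; u; u / r; u / (1 + r)]]).
  rewrite -(card_uniqP uniq_pts); apply: eq_card => x.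
  by rewrite -(subrK Fd x) (agree_tri_twist _ a0 u0 hpu) (mem_map (addIr Fd)).
rewrite /cadj pA twist_AGL //= -(hd_agree (tri Fd p) (tri Fd (twist p))) card_agree addnK.
rewrite eqxx andbT.
apply: contra pF => /eqP/(congr1 (fun z : {perm F} => z Fd)).
by rewrite twistE dil_center => /esym/eqP; rewrite dil_fix ?root_neq1.
Qed.

Lemma twist_of_agree p s : p \in AGL F -> s \in AGL F -> (s^-1)%g Fd != Fd ->
  p ((s^-1)%g Fd) = s Fd -> (p^-1)%g Fd - Fd = r * ((s^-1)%g Fd - Fd) -> s = twist p.
Proof.
move=> pA sA P'F; have [a a0 hp] := AGL_centered Fd pA; have [a' a'0 hs] := AGL_centered Fd sA.
set u' := (s^-1)%g Fd - Fd => E2 uu'.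
have u'0 : u' != 0 by rewrite subr_eq0.
have hpu x : p x = a * (x - (r * u' + Fd)) + Fd by rewrite -uu' subrK.
have hsu x : s x = a' * (x - (u' + Fd)) + Fd by rewrite subrK.
have a'E : a' = a * r ^+ 2.
  have P'E : (s^-1)%g Fd = u' + Fd by rewrite subrK.
  move: E2; rewrite hpu hsu P'E => /addIr E2; apply: (mulIf u'0).
  rewrite root_sqr; transitivity (- (a' * (Fd - (u' + Fd)))); first by ring.
  by rewrite -E2; ring.
apply/permP => x; rewrite (twist_centered _ hpu) hsu a'E; congr (_ * (_ - (_ + _)) + _).
by field; exact: root_neq0.
Qed.

Lemma cadj_twistP p s : cadj Fd p s -> s = twist p \/ p = twist s.
Proof.
move=> adj; have /and4P[pA sA _ _] := adj.
have [PF P'F E1 E2] := cadj_agree card_ge4 adj.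
have [a a0 hp] := AGL_centered Fd pA; have [a' a'0 hs] := AGL_centered Fd sA.
set P := (p^-1)%g Fd in PF E1 E2 hp *; set P' := (s^-1)%g Fd in P'F E1 E2 hs *.
set u := P - Fd; set u' := P' - Fd.
have E1' : a * u + a' * (u - u') = 0.
  have := E1; rewrite hp hs => /addIr e.
  by transitivity (a' * (P - P') - a * (Fd - P)); [rewrite /u /u'; ring | rewrite e subrr].
have E2' : a * (u' - u) + a' * u' = 0.
  have := E2; rewrite hp hs => /addIr e.
  by transitivity (a * (P' - P) - a' * (Fd - P')); [rewrite /u /u'; ring | rewrite e subrr].
(* Eliminating [a] and [a'] leaves [u^2 - u u' + u'^2 = 0], i.e. [u = r u'] or [u' = r u]. *)
have : a * a' * ((u - r * u') * (u' - r * u)) = 0.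
  transitivity (- r * ((a * u + a' * (u - u')) * (a' * u')
                      + a' * (u' - u) * (a * (u' - u) + a' * u'))
                + a * a' * u * u' * (r ^+ 2 - r + 1)); first by ring.
  by rewrite E1' E2' r_root; ring.
move/eqP; rewrite !mulf_eq0 (negbTE a0) (negbTE a'0) /= !subr_eq0 => /orP[/eqP uu' | /eqP u'u].
  by left; apply: twist_of_agree pA sA P'F E2 uu'.
by right; apply: twist_of_agree sA pA PF (esym E1) u'u.
Qed.

Lemma cadj_moves p s : cadj Fd p s -> p Fd != Fd.
Proof.
move=> /(cadj_agree card_ge4)[PF _ _ _]; apply: contra PF => /eqP pF.
by rewrite -{1}pF permK.
Qed.

Lemma isolatedE p : p \in AGL F -> isolated Fd p = (p Fd == Fd).
Proof.
move=> pA; apply/forallP/idP => [iso_p | pF s].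
  by apply: contraT => pF; have := iso_p (twist p); rewrite cadj_twist.
by apply: contraL pF => /cadj_moves ->.
Qed.

Lemma root_cube : r ^+ 3 = -1.
Proof. by rewrite exprS root_sqr; apply/subr0_eq; rewrite -[RHS]r_root; ring. Qed.

Lemma root_prim6 : 2 != 0 :> F -> 6%N.-primitive_root r.
Proof.
move=> two_neq0; have r6 : r ^+ 6 = 1 by rewrite -[6%N]/(3 * 2)%N exprM root_cube sqrrN expr1n.
have [m m_prim] := prim_order_exists (isT : (0 < 6)%N) r6.
rewrite dvdn_divisors // !inE => /or4P[] /eqP mE; rewrite mE in m_prim => //.
all: have := prim_expr_order m_prim.
- by move/eqP; rewrite expr1 (negbTE root_neq1).
- move=> r2; have rN1 : r = -1 by rewrite -root_cube exprS r2 mulr1.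
  by move: r_neqN1; rewrite rN1 addNr eqxx.
- move=> r3; move: two_neq0; have -> : 2 = 1 - r ^+ 3 :> F by rewrite root_cube; ring.
  by rewrite r3 subrr eqxx.
Qed.

Lemma root_prim3 : 2 = 0 :> F -> 3%N.-primitive_root r.
Proof.
move=> two_eq0; have r3 : r ^+ 3 = 1.
  by rewrite root_cube -[RHS]subr0 -two_eq0; ring.
have [m m_prim] := prim_order_exists (isT : (0 < 3)%N) r3.
rewrite dvdn_divisors // !inE => /orP[] /eqP mE; rewrite mE in m_prim => //.
by have := prim_expr_order m_prim; move/eqP; rewrite expr1 (negbTE root_neq1).
Qed.

Section Cycle.
Variable n : nat.
Hypothesis r_prim : n.-primitive_root r.

Lemma iter_twist_order z : iter n twist z = z.
Proof. exact/iter_twist_id/prim_expr_order. Qed.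

Lemma iter_twist_predK z : iter n.-1 twist (twist z) = z.
Proof. by rewrite -iterSr prednK ?(prim_order_gt0 r_prim) ?iter_twist_order. Qed.

Lemma mem_traject_twist p k : iter k twist p \in traject twist p n.
Proof.
apply/loopingP; rewrite /looping iter_twist_order.
by case: n (prim_order_gt0 r_prim) => // n' _; rewrite mem_head.
Qed.

Lemma cadjE p s : p \in AGL F -> p Fd != Fd ->
  cadj Fd p s = (s == twist p) || (p == twist s).
Proof.
move=> pA pF; apply/idP/idP => [/cadj_twistP[]-> | /orP[/eqP-> | /eqP pE]].
- by rewrite eqxx.
- by rewrite eqxx orbT.
- exact: cadj_twist.
have sE : s = iter n.-1 twist p by rewrite pE iter_twist_predK.
by rewrite cadj_sym pE cadj_twist // sE ?iter_twist_AGL ?iter_twist_moves.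
Qed.

Lemma uniq_traject_twist p : p Fd != Fd -> uniq (traject twist p n).
Proof.
move=> pF; have lt_pred : (n.-1 < n)%N by rewrite ltn_predL (prim_order_gt0 r_prim).
rewrite -(ltn_predK lt_pred) looping_uniq; apply/trajectP => -[i lt_i].
move/(congr1 (fun z : {perm F} => z Fd)); rewrite !iter_twist_center => /(dil_injl pF)/eqP.
rewrite (eq_prim_root_expr r_prim) !modn_small ?(ltn_trans lt_i) // => /eqP ni.
by rewrite ni ltnn in lt_i.
Qed.

Lemma fcycle_traject_twist p : fcycle twist (traject twist p n).
Proof.
case: n (prim_order_gt0 r_prim) iter_twist_predK => // n' _ twistK.
rewrite trajectS /= (_ : rcons _ p = traject twist (twist p) n'.+1) ?fpath_traject //.
by rewrite trajectSr twistK.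
Qed.

Lemma component_twist p : p \in AGL F -> p Fd != Fd ->
  component Fd p = [set x in traject twist p n].
Proof.
move=> pA pF; apply/setP => y; rewrite !inE; apply/idP/idP.
  have closed_orbit : closed (cadj Fd) (traject twist p n).
    apply: (intro_closed (sym_connect_sym (cadj_sym Fd))) => x z.
    move=> /cadj_twistP[-> | xE] /trajectP[k _ xk]; first by rewrite xk -iterS mem_traject_twist.
    by rewrite -(iter_twist_predK z) -xE xk -iterD mem_traject_twist.
  by move/(closed_connect closed_orbit) <-; rewrite (mem_traject_twist p 0).
move/trajectP=> [k _ ->]; elim: k => [|k IH]; first exact: connect0.
apply: connect_trans IH (connect1 _); rewrite iterS.
by apply: cadj_twist; [exact: iter_twist_AGL | exact: iter_twist_moves].
Qed.

Lemma component_cycle p : p \in AGL F -> p Fd != Fd ->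
  is_cycle_graph (cadj Fd) (component Fd p) n.
Proof.
move=> pA pF; exists (traject twist p n).
split; [exact: uniq_traject_twist | exact: size_traject | exact: component_twist |].
have nextE x : x \in traject twist p n -> next (traject twist p n) x = twist x.
  by move=> xO; apply/esym/eqP/(next_cycle (fcycle_traject_twist p) xO).
move=> x y; rewrite component_twist // !inE => xO yO; rewrite !nextE //.
move/trajectP: xO => [k _ ->]; rewrite cadjE ?iter_twist_AGL ?iter_twist_moves //.
Qed.

End Cycle.

End Root.

Section FiniteField.
Variable F : finFieldType.
Local Open Scope ring_scope.

Lemma odd_card_finField : odd #|F| = (2 != 0 :> F).
Proof.
apply/idP/idP => [odd_F | two_neq0].
  apply: contraL odd_F => /eqP two_eq0; rewrite -dvdn2.
  have ord1 : #[(1 : F)%R]%g = 2%N.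
    have : (#[(1 : F)%R]%g %| 2)%N by rewrite order_dvdn zmodXgE zmod1gE two_eq0.
    rewrite dvdn_divisors // !inE => /orP[/eqP o1 | /eqP //].
    by move/eqP: o1; rewrite order_eq1 zmod1gE oner_eq0.
  by rewrite -ord1 -cardsT order_dvdG ?inE.
apply: contraR two_neq0 => even_F.
have [x _ ox] : {x | x \in [set: F] & #[x]%g = 2%N}.
  by apply: Cauchy; rewrite // cardsT dvdn2.
have x0 : x != 0 by rewrite -zmod1gE -order_eq1 ox.
have /eqP : x * 2 = 0 by rewrite mulr_natr -zmodXgE -ox expg_order.
by rewrite mulf_eq0 (negbTE x0).
Qed.

Lemma exists_Phi6_root : (#|F| %% 3 = 1)%N ->
  exists2 r : F, r ^+ 2 - r + 1 = 0 & r + 1 != 0.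
Proof.
move=> F3.
have d3 : (3 %| #|[set: {unit F}]%G|)%N.
  by have := finNzRing_gt1 F; rewrite card_finField_unit; lia.
have [w _ ow] := Cauchy (isT : prime 3) d3.
have w3 : val w ^+ 3 = 1 by rewrite -val_unitX -ow expg_order.
have w1 : val w != 1.
  by apply/eqP => w1; move: ow; rewrite (_ : w = 1%g) ?order1 //; apply: val_inj.
have w_root : val w ^+ 2 + val w + 1 = 0.
  have w1' : val w - 1 != 0 by rewrite subr_eq0.
  apply: (mulfI w1'); rewrite mulr0; transitivity (val w ^+ 3 - 1); first by ring.
  by rewrite w3 subrr.
exists (- val w); first by rewrite -w_root; ring.
by rewrite addrC subr_eq0 eq_sym.
Qed.

End FiniteField.

Unset Implicit Arguments.

Theorem theorem6 (F : finFieldType) (Fd : F) :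
  #|F| %% 3 = 1 ->
  [/\ (forall p, p \in AGL F -> (isolated Fd p <-> fun_of_perm p Fd = Fd)),
      #|[set p in AGL F | isolated Fd p]| = #|F| - 1,
      (odd #|F| -> forall p, p \in AGL F -> ~~ isolated Fd p ->
          is_cycle_graph (cadj Fd) (component Fd p) 6) &
      (~~ odd #|F| -> forall p, p \in AGL F -> ~~ isolated Fd p ->
          is_cycle_graph (cadj Fd) (component Fd p) 3)].
Proof.
move=> F3; have [r r_root r_neqN1] := exists_Phi6_root F3.
have isoE := isolatedE Fd r_root r_neqN1.
split.
- by move=> p pA; rewrite isoE //; split=> /eqP.
- rewrite subn1 -(card_AGL_fix Fd); apply: eq_card => p.
  by apply/setIdP/setIdP => -[pA]; rewrite isoE.
- move=> odd_F p pA; rewrite isoE // => pF.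
  apply: (component_cycle r_root r_neqN1 _ pA pF).
  by apply: (root_prim6 r_root r_neqN1); rewrite -odd_card_finField.
- move=> even_F p pA; rewrite isoE // => pF.
  apply: (component_cycle r_root r_neqN1 _ pA pF).
  by apply: (root_prim3 r_root); apply/eqP; apply: contraNT even_F; rewrite odd_card_finField.
Qed.
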